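(* Define $L_0 = 0^+$ and $L_k = L_{k-1} \cup L_{k-1}\, k\, \{0,\ldots,k-1\}^*$ for $k \ge 1$. For all $k \ge 0$ and all $x \in \mathbb{N}^*$ we have $\mathrm{alt}_{L_k}(x) \le 2^{k+2}-2$. Moreover, regarding $L_k$ as a language over the alphabet $\{0,\ldots,k\}$, $V_{L_k}(n) \le (2^{k+3}\cdot(k+3)+1)\cdot\log n + c_k$ for all sufficiently large $n$, where $c_k$ depends only on $k$.
   Context: Words are over the (infinite) alphabet $\mathbb{N}$ for the first claim. For a language $L$ and $x=a_1\cdots a_n$, a position $1\le i\le n$ is an $L$-alternation point if exactly one of $a_i\cdots a_n$ and $a_{i+1}\cdots a_n$ belongs to $L$; $\mathrm{alt}_L(x)$ is their number. $\log x=\lfloor\log_2 x\rfloor$. Variable-size sliding window model over a finite alphabet $\Sigma$: a streaming algorithm is a deterministic (possibly infinite-state) automaton with an injective encoding $\mathrm{enc}$ of states into bit strings; over $\overline\Sigma=\Sigma\cup\{\downarrow\}$ define $\mathrm{wnd}(\varepsilon)=\varepsilon$, $\mathrm{wnd}(ub)=\mathrm{wnd}(u)b$ ($b\in\Sigma$), $\mathrm{wnd}(u\!\downarrow)=\varepsilon$ if $\mathrm{wnd}(u)=\varepsilon$, $\mathrm{wnd}(u\!\downarrow)=v$ if $\mathrm{wnd}(u)=bv$. A variable-size sliding window algorithm for $L$ accepts $\{w\in\overline\Sigma^*:\mathrm{wnd}(w)\in L\}$ with space complexity $v_\mathcal{A}(n)=\max\{|\mathrm{enc}(\mathcal{A}(u'))|:u'\text{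 prefix of }u,\ |\mathrm{wnd}(v)|\le n\text{ for all prefixes }v\text{ of }u\}$; $V_L(n)$ is the minimum of $v_\mathcal{A}(n)$ over all such algorithms. *)

From mathcomp Require Import all_boot.
Set Implicit Arguments. Unset Strict Implicit. Unset Printing Implicit Defensive.

(* Membership in the concatenation L_{k-1} k {0..k-1}^* is decided by
   trying every split position i of w: w = take i w ++ (w_i :: drop i.+1 w). *)
Fixpoint inL (k : nat) (w : seq nat) : bool :=
  match k with
  | 0 => (w != [::]) && all (fun a => a == 0) w
  | k'.+1 =>
      inL k' w ||
      has (fun i => [&& inL k' (take i w), nth 0 w i == k'.+1
                      & all (fun a => a < k'.+1) (drop i.+1 w)])
          (iota 0 (size w))
  end.

(* alt_L(x): number of positions i (1 <= i <= n) such that exactly one of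
   a_i...a_n and a_{i+1}...a_n belongs to L.  With 0-based index j = i-1,
   a_i...a_n = drop j x and a_{i+1}...a_n = drop j.+1 x. *)
Definition alt (L : pred (seq nat)) (x : seq nat) : nat :=
  count (fun j => L (drop j x) != L (drop j.+1 x)) (iota 0 (size x)).

Definition log2 (x : nat) : nat := trunc_log 2 x.

(* Extended alphabet  Σ ∪ {↓}  rendered as option Σ, with None = ↓. *)
Fixpoint wnd_rev (S : Type) (acc : seq S) (u : seq (option S)) : seq S :=
  match u with
  | [::] => acc
  | Some b :: u' => wnd_rev (rcons acc b) u'
  | None :: u' => wnd_rev (behead acc) u'
  end.
Definition wnd (S : Type) (u : seq (option S)) : seq S := wnd_rev [::] u.

Record stream_alg (S : Type) := StreamAlg {
  st : Type;
  init : st;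
  step : st -> option S -> st;
  accept : st -> bool;
  enc : st -> seq bool;
  enc_inj : injective enc
}.

Definition run (S : Type) (A : stream_alg S) (u : seq (option S)) : st A :=
  foldl (@step S A) (@init S A) u.

Definition sw_alg_for (S : Type) (L : seq S -> bool) (A : stream_alg S) : Prop :=
  forall w : seq (option S), accept (run A w) = L (wnd w).

(* v_A(n) <= b, where v_A(n) is the maximum of |enc(A(u'))| over prefixes u'
   of streams u all of whose prefixes v satisfy |wnd(v)| <= n
   (the maximum being +infinity if unbounded). *)
Definition space_le (S : Type) (A : stream_alg S) (n b : nat) : Prop :=
  forall u : seq (option S),
    (forall i, size (wnd (take i u)) <= n) ->
    forall i, size (enc (run A (take i u))) <= b.

(* V_L(n) <= b, where V_L(n) is the minimum of v_A(n) over all variable-size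
   sliding window algorithms A for L. *)
Definition V_le (S : Type) (L : seq S -> bool) (n b : nat) : Prop :=
  exists A : stream_alg S, sw_alg_for L A /\ space_le A n b.

Definition Lfin (k : nat) (w : seq 'I_k.+1) : bool := inL k (map val w).

From mathcomp Require Import all_boot zify.
Set Implicit Arguments. Unset Strict Implicit. Unset Printing Implicit Defensive.

(* A word lies in L_k iff it is nonempty, starts with 0, has all letters <= k,
   and none of its nonzero letters equals the maximum of the letters before it.
   Split x at its last letter c > k.  If c > k+1, or c = k+1 is preceded by a
   further letter >= k+1, no suffix through that letter lies in L_{k+1}; around
   a single k+1, L_{k+1}-membership of the suffixes is L_k-membership of the
   two sides.  Hence alt_{k+1} <= 2 alt_k + 2, which gives 2^(k+2) - 2.
   The algorithm stores, for every suffix of the window, its membership bit and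
   its maximum: appending a letter updates each entry locally, expiring a letter
   drops the first entry.  Along the window the bits change at most alt times
   and the maxima at most k times, so the run-length encoding of this sequence
   has at most 2^(k+2) + k runs of O(log n) bits each. *)

(** * Membership in L_k *)

Definition maxl (w : seq nat) : nat := foldl maxn 0 w.

Lemma foldl_maxnE m w : foldl maxn m w = maxn m (maxl w).
Proof.
rewrite /maxl; elim: w m => [|a w IH] m /=; first by rewrite maxn0.
by rewrite IH (IH (maxn 0 a)) max0n maxnA.
Qed.

Lemma foldl_maxn_leq m w b : (foldl maxn m w <= b) = (m <= b) && all (leq^~ b) w.
Proof. by elim: w m => [|a w IH] m /=; rewrite ?andbT // IH geq_max andbA. Qed.

Lemma maxl_cons a w : maxl (a :: w) = maxn a (maxl w).
Proof. by rewrite /maxl /= foldl_maxnE max0n. Qed.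

Lemma maxl_rcons w a : maxl (rcons w a) = maxn (maxl w) a.
Proof. by rewrite /maxl -cats1 foldl_cat. Qed.

Fixpoint fresh_max (m : nat) (w : seq nat) : bool :=
  if w is a :: w' then ((a == 0) || (a != m)) && fresh_max (maxn m a) w' else true.

Lemma fresh_max_cat m u v :
  fresh_max m (u ++ v) = fresh_max m u && fresh_max (foldl maxn m u) v.
Proof. by elim: u m => [|a u IH] m //=; rewrite IH andbA. Qed.

Lemma fresh_max_zeros m w : all (leq^~ 0) w -> fresh_max m w.
Proof. by elim: w m => [|[|a] w IH] m //= /IH ->. Qed.

Lemma fresh_max_top k v :
  all (leq^~ k.+1) v && fresh_max k.+1 v = all (leq^~ k) v.
Proof.
elim: v => [|a v IH] //=; case: (leqP a k.+1) => [ak|ka]; last first.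
  by rewrite leqNgt (ltnW ka).
rewrite /= andbCA IH; congr (_ && _).
by case: a ak => [|a] //; rewrite ltnS eqSS ltn_neqAle => ->; rewrite andbT.
Qed.

Lemma all_fresh_max_cat_top k u v :
  all (leq^~ k.+1) (u ++ k.+1 :: v) && fresh_max 0 (u ++ k.+1 :: v) =
  [&& all (leq^~ k) u, fresh_max 0 u & all (leq^~ k) v].
Proof.
rewrite all_cat fresh_max_cat /= foldl_maxnE max0n ltnSn.
have [uk|uk] := boolP (all (leq^~ k) u).
  have Mk : maxl u < k.+1 by rewrite ltnS /maxl foldl_maxn_leq.
  have -> : all (leq^~ k.+1) u by apply: sub_all uk => a /leqW.
  rewrite (maxn_idPr (ltnW Mk)) eq_sym (ltn_eqF Mk) -(fresh_max_top k v).
  by case: (all _ v); case: (fresh_max _ u); case: (fresh_max _ v).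
apply/negbTE; rewrite negb_and; case uk1: (all (leq^~ k.+1) u); last by [].
apply/orP; right.
suff -> : maxl u = k.+1 by rewrite eqxx !andbF.
by apply/eqP; rewrite eqn_leq ltnNge /maxl !foldl_maxn_leq uk1 (negbTE uk).
Qed.

Lemma has_splitP (T : Type) (x0 : T) (P : seq T -> T -> seq T -> bool) w :
  reflect (exists u a v, w = u ++ a :: v /\ P u a v)
          (has (fun i => P (take i w) (nth x0 w i) (drop i.+1 w)) (iota 0 (size w))).
Proof.
apply: (iffP hasP) => [[i] | [u [a [v [-> Puav]]]]].
  rewrite mem_iota => /andP[_ iw] Pi; exists (take i w), (nth x0 w i), (drop i.+1 w).
  by rewrite -drop_nth // cat_take_drop.
exists (size u); first by rewrite mem_iota size_cat /= addnS ltnS leq_addr.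
by rewrite take_size_cat // nth_cat ltnn subnn -cat_rcons drop_size_cat ?size_rcons.
Qed.

Definition Lspec (k : nat) (w : seq nat) : bool :=
  [&& w != [::], head 0 w == 0, all (leq^~ k) w & fresh_max 0 w].

Lemma Lspec_le k w : Lspec k w -> all (leq^~ k) w.
Proof. by case/and4P. Qed.

Lemma Lspec_succ_notin k w : k.+1 \notin w -> Lspec k.+1 w = Lspec k w.
Proof.
move=> kw; rewrite /Lspec; congr [&& _, _, _ & _]; apply: eq_in_all => a aw.
by rewrite leq_eqVlt ltnS; case: eqP => // ak; rewrite -ak aw in kw.
Qed.

Lemma Lspec_cat_top k u v :
  Lspec k.+1 (u ++ k.+1 :: v) = Lspec k u && all (leq^~ k) v.
Proof.
by case: u => [|b u] //; rewrite /Lspec all_fresh_max_cat_top !andbA.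
Qed.

Lemma inL_Lspec k w : inL k w = Lspec k w.
Proof.
elim: k w => [|k IH] w.
  rewrite /Lspec; case: w => [|a w] //=.
  have -> : all (eq_op^~ 0) w = all (leq^~ 0) w by apply: eq_all => b; rewrite leqn0.
  case: a => [|a] //=.
  by case w0: (all _ w) => //; rewrite fresh_max_zeros.
pose P u a v := [&& inL k u, a == k.+1 & all (leq^~ k) v].
have splitP := has_splitP 0 P w.
rewrite /= IH; have [kw|kw] := boolP (k.+1 \in w).
  have -> : Lspec k w = false.
    by apply: contraTF kw => /Lspec_le/allP kw; apply/negP => /kw; rewrite ltnn.
  apply/splitP/idP => [[u [a [v [-> /and3P[Lu /eqP-> vk]]]]]|].
    by rewrite Lspec_cat_top -IH Lu.
  case/splitPr: kw => u v; rewrite Lspec_cat_top -IH => /andP[Lu vk].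
  by exists u, k.+1, v; rewrite /P Lu eqxx.
rewrite Lspec_succ_notin // (_ : has _ _ = false) ?orbF //.
apply/negbTE/negP => /splitP[u [a [v [wE /and3P[_ /eqP ak _]]]]].
by move: kw; rewrite wE ak mem_cat inE eqxx orbT.
Qed.

Lemma inL_nil k : inL k [::] = false.
Proof. by rewrite inL_Lspec. Qed.

Lemma inL_succ_low k w : all (leq^~ k) w -> inL k.+1 w = inL k w.
Proof.
move=> wk; rewrite !inL_Lspec Lspec_succ_notin //.
by apply/negP => /(allP wk); rewrite ltnn.
Qed.

Lemma inL_succ_top k u v : inL k.+1 (u ++ k.+1 :: v) = inL k u && all (leq^~ k) v.
Proof. by rewrite !inL_Lspec Lspec_cat_top. Qed.

Lemma inL_above k u c v : k < c -> inL k (u ++ c :: v) = false.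
Proof.
move=> kc; rewrite inL_Lspec; apply: contraTF kc => /Lspec_le/allP/(_ c).
by rewrite mem_cat inE eqxx orbT -leqNgt => ->.
Qed.

Lemma inL_succ_above_top k u c y v :
  k < c -> inL k.+1 (u ++ c :: y ++ k.+1 :: v) = false.
Proof.
rewrite leq_eqVlt => /predU1P[<-|kc]; last exact: inL_above.
by rewrite inL_succ_top all_cat /= ltnn !andbF.
Qed.

Lemma inL_rcons k w a : w != [::] -> a <= k ->
  inL k (rcons w a) = inL k w && ((a == 0) || (a != maxl w)).
Proof.
case: w => [|b w] // _ ak; rewrite !inL_Lspec /Lspec -cats1 all_cat fresh_max_cat /=.
by rewrite ak /maxl /= !andbT !andbA.
Qed.

(** * Alternation number *)

Lemma alt_cons L a x : alt L (a :: x) = (L (a :: x) != L x) + alt L x.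
Proof. by rewrite /alt /= drop0 -[1]addn0 iotaDl count_map. Qed.

Lemma alt_cat L u v : alt L (u ++ v) = alt (fun s => L (s ++ v)) u + alt L v.
Proof. by elim: u => [|a u IH] //=; rewrite !alt_cons IH addnA. Qed.

Lemma eq_alt (P : pred nat) L L' x :
  (forall s, all P s -> L s = L' s) -> all P x -> alt L x = alt L' x.
Proof.
move=> LL'; elim: x => [|a x IH] //= /andP[Pa Px].
by rewrite !alt_cons IH // !LL' //= Pa.
Qed.

Lemma alt_cst L b x : (forall s, L s = b) -> alt L x = 0.
Proof. by move=> Lb; elim: x => [|a x IH] //; rewrite alt_cons IH !Lb eqxx. Qed.

Lemma alt_dead L u c v :
  (forall s, L (s ++ c :: v) = false) -> alt L (u ++ c :: v) <= (alt L v).+1.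
Proof.
by move=> dead; rewrite alt_cat (alt_cst _ dead) alt_cons (dead [::]); case: (_ != _).
Qed.

Lemma alt_inL_succ_low k x : all (leq^~ k) x -> alt (inL k.+1) x = alt (inL k) x.
Proof. exact: eq_alt (@inL_succ_low k). Qed.

Lemma alt_inL_succ_top k u v : all (leq^~ k) u -> all (leq^~ k) v ->
  alt (inL k.+1) (u ++ k.+1 :: v) <= alt (inL k) u + (alt (inL k) v).+1.
Proof.
move=> uk vk; rewrite alt_cat (eq_alt (L' := inL k) _ uk); last first.
  by move=> s _; rewrite inL_succ_top vk andbT.
by rewrite alt_cons alt_inL_succ_low // leq_add2l; case: (_ != _).
Qed.

Lemma split_last_above k x :
  all (leq^~ k) x \/ exists u c v, [/\ x = u ++ c :: v, k < c & all (leq^~ k) v].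
Proof.
elim: x => [|a x [xk|[u [c [v [-> kc vk]]]]]]; first by left.
  by case: (leqP a k) => [ak|ka]; [left; rewrite /= ak | right; exists [::], a, x].
by right; exists (a :: u), c, v.
Qed.

Lemma alt_inL0 x : alt (inL 0) x <= 2.
Proof.
have alt_zeros z : all (leq^~ 0) z -> alt (inL 0) z <= 1.
  have inL0 s : all (leq^~ 0) s -> inL 0 s = (s != [::]).
    by move=> s0; rewrite /= (eq_all (a2 := leq^~ 0)) ?s0 ?andbT // => b; rewrite leqn0.
  elim: z => [|a z IH] // /andP[a0 z0]; rewrite alt_cons !inL0 //= ?a0 //.
  by case: z IH z0 => [|b z] IH z0 //; rewrite add0n IH.
case: (split_last_above 0 x) => [x0|[u [c [v [-> c0 v0]]]]].
  exact: leq_trans (alt_zeros x x0) _.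
by apply: leq_trans (alt_dead _ (fun s => inL_above s v c0)) _; rewrite ltnS alt_zeros.
Qed.

Lemma alt_inL_succ k : (forall x, alt (inL k) x + 2 <= 2 ^ (k + 2)) ->
  forall x, alt (inL k.+1) x + 2 <= 2 ^ (k.+1 + 2).
Proof.
move=> IH x; rewrite addSn expnS.
case: (split_last_above k x) => [xk|[u [c [v [-> kc vk]]]]].
  by rewrite alt_inL_succ_low //; have := IH x; lia.
have := IH v; move: kc; rewrite leq_eqVlt => /predU1P[<-|kc].
  case: (split_last_above k u) => [uk|[u' [c' [y [-> kc' yk]]]]].
    by have := alt_inL_succ_top uk vk; have := IH u; lia.
  rewrite -catA cat_cons.
  have := alt_dead u' (fun s => inL_succ_above_top s y v kc').
  by have := alt_inL_succ_top yk vk; have := IH y; lia.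
have := alt_dead u (fun s => inL_above s v kc).
by rewrite (alt_inL_succ_low vk); lia.
Qed.

Lemma alt_inL_bound k x : alt (inL k) x + 2 <= 2 ^ (k + 2).
Proof.
elim: k x => [|k IH] x; first by rewrite (_ : 2 ^ (0 + 2) = 2 + 2) // leq_add2r alt_inL0.
exact: alt_inL_succ.
Qed.

(** * Run-length encoding and prefix codes *)

Section RunLength.
Variable T : eqType.
Implicit Types (x y : T) (s : seq T) (r : seq (T * nat)).

Fixpoint changes s : nat := if s is x :: s' then (x != head x s') + changes s' else 0.

Definition cons_run x r : seq (T * nat) :=
  if r is (y, l) :: r' then if x == y then (y, l.+1) :: r' else (x, 1) :: r
  else [:: (x, 1)].

Definition rle s : seq (T * nat) := foldr cons_run [::] s.

Definition unrle r : seq T := flatten [seq nseq p.2 p.1 | p <- r].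

Lemma rleK : cancel rle unrle.
Proof.
elim=> [|x s IH] //=; rewrite -[in RHS]IH.
by case: (rle s) => [|[y l] r] //=; case: eqP => [->|].
Qed.

Lemma rle_cons x s : exists l r, rle (x :: s) = (x, l) :: r.
Proof.
rewrite /=; case: (rle s) => [|[y l] r] /=; first by exists 1, [::].
by case: eqP => [->|]; eauto.
Qed.

Lemma size_rle s : size (rle s) <= (changes s).+1.
Proof.
elim: s => [|x [|y s] IH] //; have [l [r rleE]] := rle_cons y s.
rewrite (_ : rle _ = cons_run x (rle (y :: s))) // rleE /=.
move: IH; rewrite rleE /=.
by case: (x =P y) => [<-|_] /=; rewrite ?eqxx ?add0n ?add1n.
Qed.

Lemma mem_rle s x l : (x, l) \in rle s -> (x \in s) && (l <= size s).
Proof.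
elim: s x l => [|y s IH] x l //.
have IHs : (x, l) \in rle s -> ((x == y) || (x \in s)) && (l <= (size s).+1).
  by case/IH/andP => -> /leqW ->; rewrite orbT.
change (rle (y :: s)) with (cons_run y (rle s)).
case: (rle s) IH IHs => [|[z m] r] IH IHs; rewrite /cons_run.
  by rewrite mem_seq1 => /eqP[-> ->]; rewrite inE eqxx.
case: eqP => [yz|_]; rewrite inE => /predU1P[[-> ->]|xr].
- by case/andP: (IH z m (mem_head _ _)) => -> ms; rewrite orbT ltnS ms.
- by apply: IHs; apply: mem_behead; exact: xr.
- by rewrite eqxx.
- exact: IHs.
Qed.

End RunLength.

Lemma changes_pair (A B : eqType) (s : seq (A * B)) :
  changes s <= changes (map fst s) + changes (map snd s).
Proof.
elim: s => [|[a b] s IH] //=; rewrite addnACA leq_add //.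
by case: s {IH} => [|[a' b'] s] //=; rewrite xpair_eqE negb_and; do 2!case: (_ != _).
Qed.

Lemma changes_sorted (s : seq nat) : sorted geq s -> changes s <= head 0 s.
Proof.
elim: s => [|x [|y s] IH] /=; rewrite ?eqxx // => /andP[yx ys].
apply: leq_trans (leq_add (leqnn _) (IH ys)) _.
by case: (x =P y) => [->|/eqP xy]; rewrite ?add0n // add1n ltn_neqAle eq_sym xy.
Qed.

Definition prefix_code (T : Type) (c : T -> seq bool) : Prop :=
  forall x y s s', c x ++ s = c y ++ s' -> x = y /\ s = s'.

Definition pair_code (A B : Type) (c1 : A -> seq bool) (c2 : B -> seq bool) (p : A * B) :=
  c1 p.1 ++ c2 p.2.

Lemma pair_prefix_code (A B : Type) (c1 : A -> seq bool) (c2 : B -> seq bool) :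
  prefix_code c1 -> prefix_code c2 -> prefix_code (pair_code c1 c2).
Proof.
move=> pc1 pc2 [x1 x2] [y1 y2] s s'; rewrite /pair_code /= -!catA.
by case/pc1 => -> /pc2[-> ->].
Qed.

Lemma bit_prefix_code : prefix_code (fun b : bool => [:: b]).
Proof. by move=> x y s s' [-> ->]. Qed.

Definition unary (n : nat) : seq bool := rcons (nseq n true) false.

Lemma unary_prefix_code : prefix_code unary.
Proof. by elim=> [|m IH] [|n] s s' /= [] // /IH[-> ->]. Qed.

Fixpoint bits (W x : nat) : seq bool :=
  if W is W'.+1 then odd x :: bits W' x./2 else [::].

Lemma size_bits W x : size (bits W x) = W.
Proof. by elim: W x => [|W IH] x //=; rewrite IH. Qed.

Lemma bits_inj W x y : x < 2 ^ W -> y < 2 ^ W -> bits W x = bits W y -> x = y.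
Proof.
elim: W x y => [|W IH] x y /=; first by rewrite !ltnS !leqn0 => /eqP-> /eqP->.
rewrite expnS mul2n -!ltn_half_double => xW yW [oxy /(IH _ _ xW yW) hxy].
by rewrite -[x]odd_double_half -[y]odd_double_half oxy hxy.
Qed.

Definition width (x : nat) : nat := (log2 x).+1.

Definition nat_code (x : nat) : seq bool := unary (width x) ++ bits (width x) x.

Lemma nat_code_prefix_code : prefix_code nat_code.
Proof.
move=> x y s s'; rewrite /nat_code -!catA => /unary_prefix_code[wxy].
rewrite wxy => /eqP; rewrite eqseq_cat ?size_bits // => /andP[/eqP bxy /eqP ->].
by split=> //; apply: bits_inj bxy; [rewrite -wxy|]; apply: trunc_log_ltn.
Qed.

Lemma size_nat_code x : size (nat_code x) = (width x).*2.+1.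
Proof. by rewrite size_cat size_rcons size_nseq size_bits addSn addnn. Qed.

Lemma flatten_prefix_code_inj (T : Type) (c : T -> seq bool) :
  (forall x, c x != [::]) -> prefix_code c -> injective (fun s => flatten (map c s)).
Proof.
move=> c0 pc; elim=> [|x s IH] [|y s'] //=.
- by case: (c y) (c0 y).
- by case: (c x) (c0 x).
by case/pc => -> /IH ->.
Qed.

Lemma size_flatten_map_le (T : Type) (c : T -> seq bool) s b :
  all (fun x => size (c x) <= b) s -> size (flatten (map c s)) <= size s * b.
Proof.
by elim: s => [|x s IH] //= /andP[cx /IH cs]; rewrite size_cat mulSn leq_add.
Qed.

Definition run_code : bool * nat * nat -> seq bool :=
  pair_code (pair_code (fun b => [:: b]) unary) nat_code.

Definition enc_state (t : seq (bool * nat)) : seq bool := flatten (map run_code (rle t)).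

Lemma enc_state_inj : injective enc_state.
Proof.
move=> t t' /flatten_prefix_code_inj eq_rle; apply: (can_inj (@rleK _)); apply: eq_rle.
  by case=> [[]].
apply: pair_prefix_code nat_code_prefix_code.
exact: pair_prefix_code bit_prefix_code unary_prefix_code.
Qed.

(** * The sliding window algorithm *)

Fixpoint profile (L : pred (seq nat)) (w : seq nat) : seq (bool * nat) :=
  if w is _ :: x then (L w, maxl w) :: profile L x else [::].

Lemma size_profile L w : size (profile L w) = size w.
Proof. by elim: w => //= a w ->. Qed.

Lemma changes_profile_fst L w : changes (map fst (profile L w)) <= alt L w.
Proof.
elim: w => [|a x IH] //=; rewrite alt_cons leq_add //.
by case: x {IH} => [|b x] /=; rewrite ?eqxx.
Qed.

Lemma changes_profile_snd L w : changes (map snd (profile L w)) <= maxl w.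
Proof.
have -> : maxl w = head 0 (map snd (profile L w)) by case: w.
apply: changes_sorted; elim: w => [|a [|b x] IH] //=.
by rewrite [maxl (a :: _)]maxl_cons leq_maxr; exact: IH.
Qed.

Lemma profile_max_le L k w :
  all (leq^~ k) w -> all (fun p => p.2 <= k) (profile L w).
Proof.
elim: w => [|a x IH] //= /andP[ak xk].
by rewrite IH // andbT maxl_cons geq_max ak /maxl foldl_maxn_leq xk.
Qed.

Definition push_letter (a : nat) (p : bool * nat) : bool * nat :=
  (p.1 && ((a == 0) || (a != p.2)), maxn p.2 a).

Lemma profile_rcons k w a : a <= k ->
  profile (inL k) (rcons w a) = rcons (map (push_letter a) (profile (inL k) w)) (a == 0, a).
Proof.
move=> ak; elim: w => [|b x IH] /=.
  by rewrite inL_Lspec /Lspec /maxl /= ak max0n; case: a {ak}.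
rewrite IH; congr (_ :: _).
by rewrite /push_letter /= -rcons_cons inL_rcons // maxl_rcons.
Qed.

Lemma size_enc_profile k w : all (leq^~ k) w ->
  size (enc_state (profile (inL k) w)) <= (2 ^ (k + 2) + k) * (2 * log2 (size w) + k + 5).
Proof.
move=> wk; have size_runs : size (rle (profile (inL k) w)) <= 2 ^ (k + 2) + k.
  have wmax : maxl w <= k by rewrite /maxl foldl_maxn_leq.
  apply: leq_trans (size_rle _) _; rewrite -addn1.
  apply: leq_trans (leq_add (changes_pair _) (leqnn 1)) _.
  apply: leq_trans (leq_add (leq_add (changes_profile_fst _ _) (changes_profile_snd _ _))
                            (leqnn 1)) _.
  by have := alt_inL_bound k w; lia.
apply: leq_trans (leq_mul size_runs (leqnn _)); apply: size_flatten_map_le.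
apply/allP => -[[b M] l] /mem_rle /andP[/(allP (profile_max_le _ wk)) /= Mk lt].
have ll : log2 l <= log2 (size w) by apply: leq_trunc_log; rewrite -(size_profile (inL k)).
by rewrite /run_code /pair_code /= size_cat size_rcons size_nseq size_nat_code /width -mul2n; lia.
Qed.

Lemma space_arith P k L' L : 0 < P -> L' <= L ->
  (P + k) * (2 * L' + k + 5) <= (2 * P * (k + 3) + 1) * L + (P + k) * (k + 5).
Proof.
move=> P0 L'L; have := leq_mul (leqnn (P + k)) (leq_mul (leqnn 2) L'L).
have : 2 * (P + k) * L <= (2 * P * (k + 3) + 1) * L by apply: leq_mul => //; nia.
lia.
Qed.

Section Algorithm.
Variable k : nat.

Definition lk_step (t : seq (bool * nat)) (o : option 'I_k.+1) : seq (bool * nat) :=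
  if o is Some a then rcons (map (push_letter a) t) (val a == 0, val a) else behead t.

Definition lk_accept (t : seq (bool * nat)) : bool := (head (false, 0) t).1.

Definition lk_alg : stream_alg 'I_k.+1 :=
  @StreamAlg _ (seq (bool * nat)) [::] lk_step lk_accept enc_state enc_state_inj.

Lemma all_ord_leq (w : seq 'I_k.+1) : all (leq^~ k) (map val w).
Proof. by apply/allP => _ /mapP[a _ ->]; exact: (ltn_ord a). Qed.

Lemma foldl_lk_step acc u :
  foldl lk_step (profile (inL k) (map val acc)) u = profile (inL k) (map val (wnd_rev acc u)).
Proof.
elim: u acc => [|[a|] u IH] acc //=; rewrite -IH; congr foldl.
  by rewrite map_rcons profile_rcons //; exact: (ltn_ord a).
by case: acc.
Qed.

Lemma run_lk_alg u : run lk_alg u = profile (inL k) (map val (wnd u)).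
Proof. exact: (foldl_lk_step [::]). Qed.

Lemma lk_alg_correct : sw_alg_for (@Lfin k) lk_alg.
Proof.
move=> u; rewrite run_lk_alg /Lfin /=.
by case: (map val (wnd u)) => [|a w] //=; rewrite inL_nil.
Qed.

End Algorithm.

Theorem lemma5p13 :
  forall k : nat,
    (forall x : seq nat, alt (inL k) x <= 2 ^ (k + 2) - 2) /\
    (exists c N : nat, forall n : nat, N <= n ->
       V_le (@Lfin k) n ((2 ^ (k + 3) * (k + 3) + 1) * log2 n + c)).
Proof.
move=> k; split=> [x|]; first by have := alt_inL_bound k x; lia.
exists ((2 ^ (k + 2) + k) * (k + 5)), 0 => n _.
exists (lk_alg k); split=> [|u wndn i]; first exact: lk_alg_correct.
rewrite run_lk_alg; apply: leq_trans (size_enc_profile (all_ord_leq _)) _.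
rewrite (_ : 2 ^ (k + 3) = 2 * 2 ^ (k + 2)); last by rewrite addnS expnS.
by apply: space_arith; rewrite ?expn_gt0 // size_map; apply/leq_trunc_log/wndn.
Qed.
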